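(* Let $S$ be a monoid such that the word $xt_1xyt_2y$ (distinct variables $x,y,t_1,t_2$) is an isoterm for $S$. Then for every $n\ge1$ the word $$(z_1\,t\,p_1\,t\,z_2\,t\,p_2\,t\cdots z_n\,t\,p_n\,t)(z_1q_1z_2q_2\cdots z_nq_n)(p_1r_1p_2r_2\cdots p_nr_n)(t\,q_1\,t\,r_1\,t\,q_2\,t\,r_2\cdots t\,q_n\,t\,r_n)$$ is an isoterm for $S$, where $z_i,p_i,q_i,r_i$ are distinct variables and each displayed occurrence of the letter $t$ denotes a different linear variable (distinct from each other and from all $z_i,p_i,q_i,r_i$).
   Context: Words are elements of the free semigroup over a countably infinite alphabet of variables. A monoid $S$ satisfies an identity $\mathbf u\approx\mathbf v$ if both sides are equal under every evaluation of the variables in $S$. A word $\mathbf w$ is an isoterm for $S$ if $S$ satisfies no identity $\mathbf w\approx\mathbf w'$ with $\mathbf w'\ne\mathbf w$. A variable is linear in a word if it occurs in it exactly once. *)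

From mathcomp Require Import all_boot.
Set Implicit Arguments. Unset Strict Implicit. Unset Printing Implicit Defensive.

Definition word := seq nat.

Record monoid := Monoid {
  carrier :> Type;
  mmul : carrier -> carrier -> carrier;
  mone : carrier;
  mmulA : forall a b c, mmul a (mmul b c) = mmul (mmul a b) c;
  mmul1 : forall a, mmul mone a = a;
  mmulr1 : forall a, mmul a mone = a }.

Definition weval (S : monoid) (phi : nat -> S) (w : word) : S :=
  foldr (fun a acc => mmul (phi a) acc) (mone S) w.

Definition satisfies (S : monoid) (u v : word) : Prop :=
  forall phi : nat -> S, weval phi u = weval phi v.

Definition isoterm (S : monoid) (w : word) : Prop :=
  w != [::] /\
  forall w' : word, w' != [::] -> satisfies S w w' -> w' = w.

(* x t1 x y t2 y with x = 0, t1 = 1, y = 2, t2 = 3 *)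
Definition w_xtxyty : word := [:: 0; 1; 0; 2; 3; 2].

(* Encoding of the variables of the big word, for block index i (0-based):
   z_i = 8i, p_i = 8i+1, q_i = 8i+2, r_i = 8i+3, and the four linear
   t-variables belonging to block i are 8i+4, 8i+5, 8i+6, 8i+7. *)
Definition zv i := 8 * i.
Definition pv i := 8 * i + 1.
Definition qv i := 8 * i + 2.
Definition rv i := 8 * i + 3.
Definition tv i k := 8 * i + 4 + k.

Definition big_word (n : nat) : word :=
  flatten [seq [:: zv i; tv i 0; pv i; tv i 1] | i <- iota 0 n] ++
  flatten [seq [:: zv i; qv i] | i <- iota 0 n] ++
  flatten [seq [:: pv i; rv i] | i <- iota 0 n] ++
  flatten [seq [:: tv i 2; qv i; tv i 3; rv i] | i <- iota 0 n].

(* Identities of [S] survive the deletion and the injective renaming of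
   variables.  Hence, whenever the letters of a set [L] occur in
   [U = big_word n] as a renamed copy of a factor of [x t x y t y], an identity
   [U ~ W] of [S] must leave the projection of [W] on [L] equal to that of [U].
   Such factors ([x t x], [x t x y], [t x y t], [x t x y t y], ...) fix the
   relative order in [W] of almost every pair of consecutive occurrences of
   [U]; the exceptions are the transitions [q_i z_(i+1)], [q_n p_1] and
   [r_i p_(i+1)], whose projection [a b c a d c] is not such a factor.  Once
   the projections on [{a, b}] and [{c, d}] are known to be [a b a] and
   [c d c], the only alternative left for [W] is [a b a c d c], which is a copy
   of [x t x y t y] and therefore cannot differ from [U]'s projection.  The
   chain of precedences through all occurrences of [U], together with the
   equality of letter counts, gives [W = U]. *)

From mathcomp Require Import all_boot zify.
Set Implicit Arguments. Unset Strict Implicit. Unset Printing Implicit Defensive.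

(** * Identities and isoterms *)

Section Identities.
Variable S : monoid.

Lemma weval_cat (phi : nat -> S) (u v : word) :
  weval phi (u ++ v) = mmul (weval phi u) (weval phi v).
Proof. by elim: u => [|a u IH] /=; rewrite ?mmul1 // IH mmulA. Qed.

Lemma satisfies_sym (u v : word) : satisfies S u v -> satisfies S v u.
Proof. by move=> uv phi; rewrite uv. Qed.

Lemma satisfies_ctx (p s u v : word) :
  satisfies S u v -> satisfies S (p ++ u ++ s) (p ++ v ++ s).
Proof. by move=> uv phi; rewrite !weval_cat uv. Qed.

(* Deleting the variables outside [P] amounts to evaluating them at the unit. *)
Lemma satisfies_filter (P : pred nat) (u v : word) :
  satisfies S u v -> satisfies S (filter P u) (filter P v).
Proof.
move=> uv phi; pose psi x := if P x then phi x else mone S.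
have evalE w : weval psi w = weval phi (filter P w).
  by elim: w => [|a w IH] //=; rewrite /psi; case: (P a); rewrite /= ?mmul1 IH.
by rewrite -!evalE uv.
Qed.

Lemma satisfies_map (g : nat -> nat) (u v : word) :
  satisfies S u v -> satisfies S (map g u) (map g v).
Proof.
move=> uv phi; have evalE w : weval phi (map g w) = weval (phi \o g) w.
  by elim: w => [|a w IH] //=; rewrite IH.
by rewrite !evalE uv.
Qed.

(* An identity [f ~ [::]] is excluded since it would let [f] be doubled in [w]. *)
Lemma isoterm_factor (w p f s f' : word) : isoterm S w -> w = p ++ f ++ s ->
  f != [::] -> satisfies S f f' -> f' = f.
Proof.
move=> [_ isoW] wE f0 ff'; subst w.
have cat_neq0 (a b c : word) : b != [::] -> a ++ b ++ c != [::] by case: a => //; case: b.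
have [f'0|f'0] := eqVneq f' [::].
  have ff : satisfies S (p ++ f ++ s) (p ++ f ++ f ++ s).
    by move=> phi; rewrite !weval_cat ff' f'0 /= !mmul1.
  move/(congr1 size): (isoW _ (cat_neq0 _ _ _ f0) ff); rewrite !size_cat.
  move=> /addnI; rewrite -{2}[size f + size s]add0n => /addIn.
  by move/eqP; rewrite size_eq0 (negPf f0).
move: (isoW _ (cat_neq0 _ _ _ f'0) (satisfies_ctx p s ff')) => pfs.
have sz : size f' = size f.
  by move/(congr1 size): pfs; rewrite !size_cat => /addnI/addIn.
move/(congr1 (take (size f) \o drop (size p))): pfs => /=.
by rewrite !drop_size_cat // !take_size_cat.
Qed.

End Identities.

Definition rename (L K : seq nat) (x : nat) := nth 0 K (index x L).

Lemma rename_inj (L K : seq nat) : uniq K -> size L = size K ->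
  {in L &, injective (rename L K)}.
Proof.
move=> uK szLK x y xL yL /eqP; rewrite /rename nth_uniq -?szLK ?index_mem //.
by move/eqP/(congr1 (nth 0 L)); rewrite !nth_index.
Qed.

Lemma isoterm_factor_filter (S : monoid) (w u v : word) (L K : seq nat) (p f s : word) :
  isoterm S w -> satisfies S u v -> uniq K -> size L = size K ->
  w = p ++ f ++ s -> f != [::] -> map (rename L K) (filter (mem L) u) = f ->
  filter (mem L) v = filter (mem L) u.
Proof.
move=> isoW uv uK szLK wE f0 uE.
have := satisfies_map (rename L K) (satisfies_filter (mem L) uv).
rewrite uE => /(isoterm_factor isoW wE f0); rewrite -uE.
by apply: (inj_in_map (rename_inj uK szLK)); exact: filter_all.
Qed.

(** * Occurrences and their order *)

Lemma subseq2_index (T : eqType) (t : seq T) (x y : T) : uniq t ->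
  subseq [:: x; y] t = (y \in t) && (index x t < index y t).
Proof.
elim: t => [|z t IH] //= /andP[zt ut]; rewrite inE.
have [_|_] := eqVneq x z; rewrite ?IH //; have [<-|_] := eqVneq z y.
- by rewrite sub1seq (negPf zt).
- by rewrite sub1seq andbT.
- by rewrite (negPf zt) andbF.
- by rewrite ltnS.
Qed.

(* [occ w] tags each letter of [w] with its number of earlier occurrences:
   [(x, k)] stands for the [k.+1]-th occurrence of [x]. *)
Fixpoint occ_from (c : nat -> nat) (w : word) : seq (nat * nat) :=
  if w is a :: w' then
    (a, c a) :: occ_from (fun b => if b == a then (c b).+1 else c b) w'
  else [::].
Definition occ (w : word) := occ_from (fun _ => 0) w.

Lemma occ_from_uniq c w : uniq (occ_from c w).
Proof.
have occ_ge c' w' a k : (a, k) \in occ_from c' w' -> c' a <= k.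
  elim: w' c' => [|b w' IH] c' //=; rewrite inE => /orP[/eqP [-> ->] //|/IH].
  by case: eqP => // ->; apply: ltnW.
elim: w c => [|a w IH] c //=; rewrite IH andbT.
by apply/negP => /occ_ge; rewrite eqxx ltnn.
Qed.

Lemma occ_uniq w : uniq (occ w). Proof. exact: occ_from_uniq. Qed.

Lemma map_fst_occ w : map fst (occ w) = w.
Proof. by rewrite /occ; elim: w (fun _ => 0) => [|a w IH] c //=; rewrite IH. Qed.

Lemma occ_filter (P : pred nat) (w : word) :
  occ (filter P w) = filter (fun o => P o.1) (occ w).
Proof.
rewrite /occ; move: (fun _ => 0) => c; have eqc : forall b, P b -> c b = c b by [].
elim: w c {1 3}c eqc => [|a w IH] c c' cc' //=; case Pa: (P a) => /=.
  by rewrite cc' //; congr cons; apply: IH => b Pb; rewrite cc'.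
apply: IH => b Pb; case: eqP => [ba|_]; last exact: cc'.
by rewrite ba Pa in Pb.
Qed.

Definition prec (w : word) (x y : nat * nat) := subseq [:: x; y] (occ w).

Lemma prec_filter (P : pred nat) (w : word) x y : P x.1 -> P y.1 ->
  prec (filter P w) x y = prec w x y.
Proof. by move=> Px Py; rewrite /prec occ_filter subseq_filter /= Px Py. Qed.

Lemma precE (w : word) x y :
  prec w x y = (y \in occ w) && (index x (occ w) < index y (occ w)).
Proof. exact/subseq2_index/occ_uniq. Qed.

Lemma prec_mem (w : word) x y : prec w x y -> (x \in occ w) && (y \in occ w).
Proof.
rewrite precE => /andP[yw xy]; rewrite yw andbT -index_mem.
exact: leq_trans xy (index_size _ _).
Qed.

Lemma prec_total (w : word) x y : x \in occ w -> y \in occ w -> x != y ->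
  prec w x y || prec w y x.
Proof.
move=> xw yw /eqP xy; rewrite !precE xw yw /=.
case: ltngtP => // /(congr1 (nth x (occ w))); rewrite !nth_index //.
Qed.

Lemma prec_trans (w : word) : transitive (prec w).
Proof.
move=> y x z; rewrite !precE => /andP[_ xy] /andP[zw yz].
by rewrite zw (ltn_trans xy yz).
Qed.

Lemma sorted_index (T : eqType) (t : seq T) : uniq t ->
  sorted (fun x y => index x t < index y t) t.
Proof.
move=> ut; rewrite sorted_pairwise; last by move=> y x z; apply: ltn_trans.
case: t ut => // x0 t ut; apply/(pairwiseP x0) => i j ilt jlt ij.
by rewrite !index_uniq.
Qed.

Lemma sorted_prec_eq (v w : word) (E : seq (nat * nat)) : map fst E = v ->
  sorted (prec w) E -> 1 < size E -> size w = size v -> w = v.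
Proof.
move=> vE sE szE szwv; pose ltw x y := index x (occ w) < index y (occ w).
have ltw_trans : transitive ltw by move=> y x z; apply: ltn_trans.
have ltwE : sorted ltw E by apply: sub_sorted sE => x y; rewrite precE => /andP[].
have Ew : {subset E <= occ w}.
  case: E {vE ltwE} sE szE => [|e [|e' E']] //= /andP[ee' pE'] _ x.
  have /allP eE' := order_path_min (@prec_trans w) pE'.
  rewrite !inE => /or3P[/eqP-> | /eqP-> | /eE' /prec_mem/andP[] //];
    by case/andP: (prec_mem ee').
have uE : uniq E by apply: sorted_uniq ltwE => // x; apply: ltnn.
have [_ Eocc] : (size E = size (occ w)) * (E =i occ w).
  apply: uniq_min_size => //.
  by rewrite -(size_map fst (occ w)) map_fst_occ szwv -vE size_map.
have occE : occ w = E.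
  apply: (irr_sorted_eq ltw_trans) => // [x|]; [exact: ltnn | exact/sorted_index/occ_uniq].
by rewrite -[w]map_fst_occ occE.
Qed.

Lemma perm_filter_count (L : seq nat) (u v : word) :
  {in L, forall x, count_mem x u = count_mem x v} ->
  perm_eq (filter (mem L) u) (filter (mem L) v).
Proof.
move=> cntL; apply/allP => x _ /=; rewrite !count_filter.
have predE : predI (pred1 x) (mem L) =1 if x \in L then pred1 x else pred0.
  by move=> y /=; case: ifP => xL /=; case: eqP => [->|]; rewrite ?xL ?andbF ?eqxx.
by rewrite !(eq_count predE); case: ifPn => [/cntL ->|]; rewrite ?count_pred0.
Qed.

(** * Projections onto factors of [x t x y t y] *)

Ltac add_sym_neqs := repeat match goal with
  | H : is_true (?x != ?y) |- _ =>
    match goal with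
    | _ : is_true (y != x) |- _ => fail 1
    | _ => have ? : y != x by rewrite eq_sym
    end
  end.

Ltac rewrite_neqs := repeat match goal with
  | H : is_true (?x != ?y) |- context [?x == ?y] => rewrite (negbTE H)
  end.

Ltac eval_distinct :=
  rewrite /prec /occ /rename /=;
  do 4 (rewrite ?xpair_eqE; rewrite_neqs; rewrite ?eqxx /=).

Section Patterns.
Variables (S : monoid) (V W : word).
Hypotheses (iso_xtxyty : isoterm S w_xtxyty) (VW : satisfies S V W).

Definition fixed (L : seq nat) := filter (mem L) W = filter (mem L) V.

Lemma fixed_factor L K p f s : uniq K -> size L = size K -> w_xtxyty = p ++ f ++ s ->
  f != [::] -> map (rename L K) (filter (mem L) V) = f -> fixed L.
Proof. exact: isoterm_factor_filter iso_xtxyty VW. Qed.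

Lemma fixed_prec L a i b j : fixed L -> a \in L -> b \in L ->
  prec (filter (mem L) V) (a, i) (b, j) -> prec W (a, i) (b, j).
Proof. by move=> fixL aL bL; rewrite -fixL prec_filter. Qed.

Lemma fixed_count L c : fixed L -> c \in L -> count_mem c W = count_mem c V.
Proof.
move=> fixL cL; have countE w : count_mem c (filter (mem L) w) = count_mem c w.
  by rewrite count_filter; apply: eq_count => x /=; case: eqP => // ->; rewrite cL.
by rewrite -countE fixL countE.
Qed.

Lemma pattern_aba a s : a != s -> filter (mem [:: a; s]) V = [:: a; s; a] ->
  [/\ prec W (a, 0) (s, 0), prec W (s, 0) (a, 1),
      count_mem a W = count_mem a V & count_mem s W = count_mem s V].
Proof.
move=> neq VE; add_sym_neqs.
have fixL : fixed [:: a; s].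
  apply: (@fixed_factor _ [:: 0; 1] [::] [:: 0; 1; 0] [:: 2; 3; 2]) => //.
  by rewrite VE; eval_distinct.
have aL : a \in [:: a; s] by rewrite !inE eqxx.
have sL : s \in [:: a; s] by rewrite !inE eqxx orbT.
split; [| | exact: fixed_count fixL aL | exact: fixed_count fixL sL].
  by apply: (fixed_prec fixL aL sL); rewrite VE; eval_distinct.
by apply: (fixed_prec fixL sL aL); rewrite VE; eval_distinct.
Qed.

Lemma pattern_abcb a b c : a != b -> a != c -> b != c ->
  filter (mem [:: a; b; c]) V = [:: a; b; c; b] -> prec W (a, 0) (b, 0).
Proof.
move=> ab ac bc VE; add_sym_neqs.
have fixL : fixed [:: a; b; c].
  apply: (@fixed_factor _ [:: 0; 2; 3] [:: 0; 1] [:: 0; 2; 3; 2] [::]) => //.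
  by rewrite VE; eval_distinct.
by apply: (fixed_prec fixL); rewrite ?inE ?eqxx ?orbT //= VE; eval_distinct.
Qed.

Lemma pattern_abac a b c : a != b -> a != c -> b != c ->
  filter (mem [:: a; b; c]) V = [:: a; b; a; c] -> prec W (a, 1) (c, 0).
Proof.
move=> ab ac bc VE; add_sym_neqs.
have fixL : fixed [:: a; b; c].
  apply: (@fixed_factor _ [:: 0; 1; 2] [::] [:: 0; 1; 0; 2] [:: 3; 2]) => //.
  by rewrite VE; eval_distinct.
by apply: (fixed_prec fixL); rewrite ?inE ?eqxx ?orbT //= VE; eval_distinct.
Qed.

Lemma fixed_abacdc a b c d : a != b -> a != c -> a != d -> b != c -> b != d -> c != d ->
  filter (mem [:: a; b; c; d]) V = [:: a; b; a; c; d; c] -> fixed [:: a; b; c; d].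
Proof.
move=> ab ac ad bc bd cd VE; add_sym_neqs.
apply: (@fixed_factor _ [:: 0; 1; 2; 3] [::] w_xtxyty [::]) => //.
by rewrite VE; eval_distinct.
Qed.

Lemma pattern_abacdc a b c d : a != b -> a != c -> a != d -> b != c -> b != d -> c != d ->
  filter (mem [:: a; b; c; d]) V = [:: a; b; a; c; d; c] -> prec W (a, 1) (c, 0).
Proof.
move=> ab ac ad bc bd cd VE; have fixL := fixed_abacdc ab ac ad bc bd cd VE.
by add_sym_neqs; apply: (fixed_prec fixL); rewrite ?inE ?eqxx ?orbT //= VE; eval_distinct.
Qed.

Lemma absent_count a b : a != b -> filter (mem [:: a; b]) V = [:: b] ->
  count_mem a W = count_mem a V.
Proof.
move=> ab VE; add_sym_neqs.
have fixL : fixed [:: a; b].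
  apply: (@fixed_factor _ [:: 0; 1] [:: 0] [:: 1] [:: 0; 2; 3; 2]) => //.
  by rewrite VE; eval_distinct.
by apply: fixed_count fixL _; rewrite inE eqxx.
Qed.

(* [a b c a d c] is not a factor of [x t x y t y], but the only other order
   [W] could have, [a b a c d c], is one and is thus excluded. *)
Lemma pattern_abcadc a b c d : a != b -> a != c -> a != d -> b != c -> b != d -> c != d ->
  filter (mem [:: a; b; c; d]) V = [:: a; b; c; a; d; c] ->
  filter (mem [:: a; b]) V = [:: a; b; a] -> filter (mem [:: c; d]) V = [:: c; d; c] ->
  prec W (c, 0) (a, 1).
Proof.
move=> ab ac ad bc bd cd VE VEab VEcd; add_sym_neqs.
have [ab0 ba1 cnta cntb] := pattern_aba ab VEab.
have [cd0 dc1 cntc cntd] := pattern_aba cd VEcd.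
have /andP[_ a1W] := prec_mem ba1.
have /andP[c0W _] := prec_mem cd0.
have c0a1 : (c, 0) != (a, 1) by rewrite xpair_eqE; rewrite_neqs.
case/orP: (prec_total c0W a1W c0a1) => // a1c0; exfalso.
pose L := [:: a; b; c; d].
have inL : [/\ a \in L, b \in L, c \in L & d \in L] by rewrite !inE !eqxx ?orbT.
have WE : filter (mem L) W = [:: a; b; a; c; d; c].
  apply: (sorted_prec_eq (E := [:: (a, 0); (b, 0); (a, 1); (c, 0); (d, 0); (c, 1)])) => //.
    by case: inL => *; rewrite /= !prec_filter //= ab0 ba1 a1c0 cd0 dc1.
  have -> : size [:: a; b; a; c; d; c] = size (filter (mem L) V) by rewrite VE.
  apply/perm_size/perm_filter_count => x.
  by rewrite !inE => /or4P[] /eqP->.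
have := isoterm_factor_filter (L := L) (K := [:: 0; 1; 2; 3]) (p := [::]) (f := w_xtxyty)
  (s := [::]) iso_xtxyty (satisfies_sym VW) isT erefl erefl isT.
rewrite WE VE => fixedV.
have [ca _] : [:: a; b; c; a; d; c] = [:: a; b; a; c; d; c].
  by apply: fixedV; rewrite /L; eval_distinct.
by rewrite ca eqxx in ac.
Qed.

End Patterns.

(** * The word [big_word n] *)

Lemma iotaS_rcons n : iota 0 n.+1 = rcons (iota 0 n) n.
Proof. by rewrite -addn1 iotaD cats1. Qed.

Lemma last_flatten_iota (T : Type) (h : nat -> T) (t : nat -> seq T) n x0 :
  last x0 (flatten [seq h j :: t j | j <- iota 0 n.+1]) = last (h n) (t n).
Proof. by rewrite iotaS_rcons map_rcons flatten_rcons last_cat. Qed.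

Lemma sorted_flatten_iota (T : Type) (R : rel T) (h : nat -> T) (t : nat -> seq T) m n :
  (forall j, m <= j < m + n -> path R (h j) (t j)) ->
  (forall j, m <= j -> j.+1 < m + n -> R (last (h j) (t j)) (h j.+1)) ->
  sorted R (flatten [seq h j :: t j | j <- iota m n]).
Proof.
elim: n m => [|n IH] m // blk link /=; rewrite cat_path blk /=; last by lia.
case: n IH blk link => [|n] IH blk link //=; rewrite link /=; try lia.
by apply: (IH m.+1) => j *; [apply: blk | apply: link]; lia.
Qed.

Lemma filter_flatten_iota (T : Type) (P : pred T) (f : nat -> seq T) n (js : seq nat) :
  sorted ltn js -> all (gtn n) js ->
  (forall j, j < n -> j \notin js -> filter P (f j) = [::]) ->
  filter P (flatten [seq f j | j <- iota 0 n]) = flatten [seq filter P (f j) | j <- js].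
Proof.
move=> js_sorted js_n f0; rewrite filter_flatten -map_comp.
have dropE s : all (gtn n) s ->
    flatten [seq filter P (f j) | j <- s] =
    flatten [seq filter P (f j) | j <- filter (mem js) s].
  elim: s => //= j s IH /andP[jn sn]; rewrite IH //; case: ifP => //= jjs.
  by rewrite f0 ?jjs.
rewrite [LHS](dropE (iota 0 n)); last by apply/allP => j; rewrite mem_iota.
congr (flatten (map _ _)); apply: (irr_sorted_eq ltn_trans ltnn) => //.
  exact/sorted_filter/iota_ltn_sorted/ltn_trans.
move=> j; rewrite mem_filter mem_iota /=.
by case: (boolP (j \in js)) => // /(allP js_n).
Qed.

Lemma sorted_cat_link (T : Type) (R : rel T) (x0 : T) (s1 s2 : seq T) :
  sorted R s1 -> sorted R s2 -> R (last x0 s1) (head x0 s2) -> sorted R (s1 ++ s2).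
Proof.
case: s1 => [|x s1] //= s1R; case: s2 => [|y s2] //=; first by rewrite cats0.
by move=> s2R link; rewrite cat_path s1R /= link.
Qed.

Definition letter i k := 8 * i + k.

Lemma zvE i : zv i = letter i 0. Proof. by rewrite /zv /letter addn0. Qed.
Lemma pvE i : pv i = letter i 1. Proof. by []. Qed.
Lemma qvE i : qv i = letter i 2. Proof. by []. Qed.
Lemma rvE i : rv i = letter i 3. Proof. by []. Qed.
Lemma tv0E i : tv i 0 = letter i 4. Proof. by rewrite /tv /letter addn0. Qed.
Lemma tv1E i : tv i 1 = letter i 5. Proof. by rewrite /tv /letter -addnA. Qed.
Lemma tv2E i : tv i 2 = letter i 6. Proof. by rewrite /tv /letter -addnA. Qed.
Lemma tv3E i : tv i 3 = letter i 7. Proof. by rewrite /tv /letter -addnA. Qed.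

Lemma letter_eq i j k l : k < 8 -> l < 8 ->
  (letter i k == letter j l) = (i == j) && (k == l).
Proof.
rewrite /letter => k8 l8; apply/eqP/andP => [eq_kl | [/eqP-> /eqP->]] //.
by split; apply/eqP; lia.
Qed.

Definition blockA j := [:: zv j; tv j 0; pv j; tv j 1].
Definition blockB j := [:: zv j; qv j].
Definition blockC j := [:: pv j; rv j].
Definition blockD j := [:: tv j 2; qv j; tv j 3; rv j].

Lemma filter_big_word (P : pred nat) n (jA jB jC jD : seq nat) :
  sorted ltn jA -> all (gtn n) jA ->
  (forall j, j < n -> j \notin jA -> filter P (blockA j) = [::]) ->
  sorted ltn jB -> all (gtn n) jB ->
  (forall j, j < n -> j \notin jB -> filter P (blockB j) = [::]) ->
  sorted ltn jC -> all (gtn n) jC ->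
  (forall j, j < n -> j \notin jC -> filter P (blockC j) = [::]) ->
  sorted ltn jD -> all (gtn n) jD ->
  (forall j, j < n -> j \notin jD -> filter P (blockD j) = [::]) ->
  filter P (big_word n) =
    flatten [seq filter P (blockA j) | j <- jA] ++ flatten [seq filter P (blockB j) | j <- jB] ++
    flatten [seq filter P (blockC j) | j <- jC] ++ flatten [seq filter P (blockD j) | j <- jD].
Proof.
move=> sA aA hA sB aB hB sC aC hC sD aD hD; rewrite !filter_cat.
by rewrite (filter_flatten_iota sA aA hA) (filter_flatten_iota sB aB hB)
  (filter_flatten_iota sC aC hC) (filter_flatten_iota sD aD hD).
Qed.

Ltac letter_eqs :=
  rewrite ?zvE ?pvE ?qvE ?rvE ?tv0E ?tv1E ?tv2E ?tv3E ?letter_eq //= ?eqxx ?andbF ?andbT //.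

Ltac decide_eqs := repeat (match goal with
  | |- context [?x == ?y] => let H := fresh "H" in
      case: (@eqP _ x y) => H; try (exfalso; move: H; rewrite ?/letter; lia);
      try subst x; try subst y
  end; rewrite ?andbF ?andbT ?orbF ?orbT /=).

Ltac filter_side := first [ by rewrite /= ?andbT; repeat (apply/andP; split); lia
  | move=> j Hj; rewrite ?inE /blockA /blockB /blockC /blockD /= ?inE; letter_eqs; decide_eqs; done ].

(* [filter_big_word jA jB jC jD] computes [filter (mem L) (big_word n)], given
   for each of the four factors of the word the increasing list of the blocks
   whose letters meet [L]. *)
Tactic Notation "filter_big_word" uconstr(jA) uconstr(jB) uconstr(jC) uconstr(jD) :=
  rewrite (@filter_big_word _ _ (jA : seq nat) (jB : seq nat) (jC : seq nat) (jD : seq nat));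
  try filter_side;
  rewrite /blockA /blockB /blockC /blockD /= ?inE; letter_eqs; decide_eqs; try done.

Definition occA j := [:: (zv j, 0); (tv j 0, 0); (pv j, 0); (tv j 1, 0)].
Definition occB j := [:: (zv j, 1); (qv j, 0)].
Definition occC j := [:: (pv j, 1); (rv j, 0)].
Definition occD j := [:: (tv j 2, 0); (qv j, 1); (tv j 3, 0); (rv j, 1)].

Definition big_occ n :=
  flatten [seq occA j | j <- iota 0 n] ++ flatten [seq occB j | j <- iota 0 n] ++
  flatten [seq occC j | j <- iota 0 n] ++ flatten [seq occD j | j <- iota 0 n].

Lemma map_fst_big_occ n : map fst (big_occ n) = big_word n.
Proof. by rewrite /big_occ !map_cat !map_flatten -!map_comp. Qed.

Lemma size_big_occ n : 0 < n -> 1 < size (big_occ n).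
Proof. by case: n. Qed.

Section BigWord.
Variables (S : monoid) (n : nat) (W : word).
Hypotheses (iso_xtxyty : isoterm S w_xtxyty) (n_gt0 : 0 < n).
Hypothesis VW : satisfies S (big_word n) W.

Lemma z_t0_z i : i < n ->
  [/\ prec W (zv i, 0) (tv i 0, 0), prec W (tv i 0, 0) (zv i, 1),
      count_mem (zv i) W = count_mem (zv i) (big_word n) &
      count_mem (tv i 0) W = count_mem (tv i 0) (big_word n)].
Proof.
move=> lt_in; apply: (pattern_aba iso_xtxyty VW); first by letter_eqs.
by filter_big_word [:: i] [:: i] [::] [::].
Qed.

Lemma p_t1_p i : i < n ->
  [/\ prec W (pv i, 0) (tv i 1, 0), prec W (tv i 1, 0) (pv i, 1),
      count_mem (pv i) W = count_mem (pv i) (big_word n) &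
      count_mem (tv i 1) W = count_mem (tv i 1) (big_word n)].
Proof.
move=> lt_in; apply: (pattern_aba iso_xtxyty VW); first by letter_eqs.
by filter_big_word [:: i] [::] [:: i] [::].
Qed.

Lemma q_t2_q i : i < n ->
  [/\ prec W (qv i, 0) (tv i 2, 0), prec W (tv i 2, 0) (qv i, 1),
      count_mem (qv i) W = count_mem (qv i) (big_word n) &
      count_mem (tv i 2) W = count_mem (tv i 2) (big_word n)].
Proof.
move=> lt_in; apply: (pattern_aba iso_xtxyty VW); first by letter_eqs.
by filter_big_word [::] [:: i] [::] [:: i].
Qed.

Lemma r_t3_r i : i < n ->
  [/\ prec W (rv i, 0) (tv i 3, 0), prec W (tv i 3, 0) (rv i, 1),
      count_mem (rv i) W = count_mem (rv i) (big_word n) &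
      count_mem (tv i 3) W = count_mem (tv i 3) (big_word n)].
Proof.
move=> lt_in; apply: (pattern_aba iso_xtxyty VW); first by letter_eqs.
by filter_big_word [::] [::] [:: i] [:: i].
Qed.

Lemma count_not_in_big_word c : 8 * n <= c -> count_mem c W = count_mem c (big_word n).
Proof.
move=> le_nc; apply: (absent_count iso_xtxyty VW (b := tv 0 0)).
  by rewrite tv0E /letter; apply/eqP; lia.
by filter_big_word [:: 0] [::] [::] [::].
Qed.

Lemma t0_before_p i : i < n -> prec W (tv i 0, 0) (pv i, 0).
Proof.
move=> lt_in; apply: (pattern_abcb iso_xtxyty VW (c := tv i 1)); try by letter_eqs.
by filter_big_word [:: i] [::] [:: i] [::].
Qed.

Lemma t1_before_next_z i : i.+1 < n -> prec W (tv i 1, 0) (zv i.+1, 0).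
Proof.
move=> lt_in; apply: (pattern_abcb iso_xtxyty VW (c := tv i.+1 0)); try by letter_eqs.
by filter_big_word [:: i; i.+1] [:: i.+1] [::] [::].
Qed.

Lemma last_t1_before_z0 : prec W (tv n.-1 1, 0) (zv 0, 1).
Proof.
have neq : zv 0 != tv n.-1 1 by letter_eqs.
suff /(pattern_aba iso_xtxyty VW neq) [] :
  filter (mem [:: zv 0; tv n.-1 1]) (big_word n) = [:: zv 0; tv n.-1 1; zv 0] by [].
have [n1|n_neq1] := eqVneq n 1; first by subst n; filter_big_word [:: 0] [:: 0] [::] [::].
by filter_big_word [:: 0; n.-1] [:: 0] [::] [::].
Qed.

Lemma z_before_q i : i < n -> prec W (zv i, 1) (qv i, 0).
Proof.
move=> lt_in; apply: (pattern_abacdc iso_xtxyty VW (b := tv i 0) (d := tv i 2));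
  try by letter_eqs.
by filter_big_word [:: i] [:: i] [::] [:: i].
Qed.

Lemma q_before_next_z i : i.+1 < n -> prec W (qv i, 0) (zv i.+1, 1).
Proof.
move=> lt_in; apply: (pattern_abcadc iso_xtxyty VW (b := tv i.+1 0) (d := tv i 2));
  try by letter_eqs.
- by filter_big_word [:: i.+1] [:: i; i.+1] [::] [:: i].
- by filter_big_word [:: i.+1] [:: i.+1] [::] [::].
- by filter_big_word [::] [:: i] [::] [:: i].
Qed.

Lemma last_q_before_p0 : prec W (qv n.-1, 0) (pv 0, 1).
Proof.
apply: (pattern_abcadc iso_xtxyty VW (b := tv 0 1) (d := tv n.-1 2)); try by letter_eqs.
- by filter_big_word [:: 0] [:: n.-1] [:: 0] [:: n.-1].
- by filter_big_word [:: 0] [::] [:: 0] [::].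
- by filter_big_word [::] [:: n.-1] [::] [:: n.-1].
Qed.

Lemma p_before_r i : i < n -> prec W (pv i, 1) (rv i, 0).
Proof.
move=> lt_in; apply: (pattern_abacdc iso_xtxyty VW (b := tv i 1) (d := tv i 3));
  try by letter_eqs.
by filter_big_word [:: i] [::] [:: i] [:: i].
Qed.

Lemma r_before_next_p i : i.+1 < n -> prec W (rv i, 0) (pv i.+1, 1).
Proof.
move=> lt_in; apply: (pattern_abcadc iso_xtxyty VW (b := tv i.+1 1) (d := tv i 3));
  try by letter_eqs.
- by filter_big_word [:: i.+1] [::] [:: i; i.+1] [:: i].
- by filter_big_word [:: i.+1] [::] [:: i.+1] [::].
- by filter_big_word [::] [::] [:: i] [:: i].
Qed.

Lemma last_r_before_t2 : prec W (rv n.-1, 0) (tv 0 2, 0).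
Proof.
have neq : rv n.-1 != tv 0 2 by letter_eqs.
suff /(pattern_aba iso_xtxyty VW neq) [] :
  filter (mem [:: rv n.-1; tv 0 2]) (big_word n) = [:: rv n.-1; tv 0 2; rv n.-1] by [].
have [n1|n_neq1] := eqVneq n 1; first by subst n; filter_big_word [::] [::] [:: 0] [:: 0].
by filter_big_word [::] [::] [:: n.-1] [:: 0; n.-1].
Qed.

Lemma q_before_t3 i : i < n -> prec W (qv i, 1) (tv i 3, 0).
Proof.
move=> lt_in; apply: (pattern_abac iso_xtxyty VW (b := tv i 2)); try by letter_eqs.
by filter_big_word [::] [:: i] [::] [:: i].
Qed.

Lemma r_before_next_t2 i : i.+1 < n -> prec W (rv i, 1) (tv i.+1 2, 0).
Proof.
move=> lt_in; apply: (pattern_abac iso_xtxyty VW (b := tv i 3)); try by letter_eqs.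
by filter_big_word [::] [::] [:: i] [:: i; i.+1].
Qed.

Lemma count_big_word c : count_mem c W = count_mem c (big_word n).
Proof.
have [lt_cn|] := ltnP c (8 * n); last exact: count_not_in_big_word.
have lt_in : c %/ 8 < n by lia.
move: (z_t0_z lt_in) (p_t1_p lt_in) (q_t2_q lt_in) (r_t3_r lt_in).
move=> [_ _ ? ?] [_ _ ? ?] [_ _ ? ?] [_ _ ? ?].
have -> : c = letter (c %/ 8) (c %% 8) by rewrite /letter mulnC -divn_eq.
case: (c %% 8) (ltn_pmod c (isT : 0 < 8)) => [|[|[|[|[|[|[|[|k]]]]]]]] // _;
  by rewrite -?zvE -?pvE -?qvE -?rvE -?tv0E -?tv1E -?tv2E -?tv3E.
Qed.

Lemma sorted_occA : sorted (prec W) (flatten [seq occA j | j <- iota 0 n]).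
Proof.
apply: sorted_flatten_iota => j /= lt_jn; last exact: t1_before_next_z.
case: (z_t0_z lt_jn) (p_t1_p lt_jn) => [-> _ _ _] [-> _ _ _].
by rewrite t0_before_p.
Qed.

Lemma sorted_occB : sorted (prec W) (flatten [seq occB j | j <- iota 0 n]).
Proof.
apply: sorted_flatten_iota => j /= lt_jn.
  by rewrite z_before_q.
exact: q_before_next_z.
Qed.

Lemma sorted_occC : sorted (prec W) (flatten [seq occC j | j <- iota 0 n]).
Proof.
apply: sorted_flatten_iota => j /= lt_jn.
  by rewrite p_before_r.
exact: r_before_next_p.
Qed.

Lemma sorted_occD : sorted (prec W) (flatten [seq occD j | j <- iota 0 n]).
Proof.
apply: sorted_flatten_iota => j /= lt_jn; last exact: r_before_next_t2.
case: (q_t2_q lt_jn) (r_t3_r lt_jn) => [_ -> _ _] [_ -> _ _].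
by rewrite q_before_t3.
Qed.

Lemma sorted_big_occ : sorted (prec W) (big_occ n).
Proof.
have [m nE] : exists m, n = m.+1 by exists n.-1; lia.
rewrite /big_occ; apply: (sorted_cat_link (x0 := (0, 0)) sorted_occA).
  apply: (sorted_cat_link (x0 := (0, 0)) sorted_occB).
    apply: (sorted_cat_link (x0 := (0, 0)) sorted_occC sorted_occD).
    by move: last_r_before_t2; rewrite nE last_flatten_iota.
  by move: last_q_before_p0; rewrite nE last_flatten_iota.
by move: last_t1_before_z0; rewrite nE last_flatten_iota.
Qed.
End BigWord.

Theorem lemma3p8 (S : monoid) (n : nat) :
  isoterm S w_xtxyty -> 1 <= n -> isoterm S (big_word n).
Proof.
move=> iso_xtxyty n_gt0; split; first by case: n n_gt0.
move=> W _ VW; apply: (sorted_prec_eq (map_fst_big_occ n)).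
- exact: sorted_big_occ iso_xtxyty n_gt0 VW.
- exact: size_big_occ.
- by apply/perm_size/allP => c _ /=; rewrite (count_big_word iso_xtxyty n_gt0 VW).
Qed.
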